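(* Let $n\ge3$ and let $p$ be a permutation pattern whose longest decreasing subsequence has length at least $4$. Then the coefficient sequence $(a_i)$ of $F_{p,n}(x)$ is unbounded.
   Context: An affine permutation of size $n$ is a bijection $w:\mathbb{Z}\to\mathbb{Z}$ with $w(i+n)=w(i)+n$ for all $i$ and $w(1)+\cdots+w(n)=\binom{n+1}{2}$; $\widetilde{S}_n$ is the group of these, generated by $s_0,\dots,s_{n-1}$ where $ws_i$ swaps the values at positions $i+mn$ and $i+1+mn$ for all $m\in\mathbb{Z}$; $\ell(w)$ is the minimal number of generators in a factorization. For $p\in S_k$, $w$ contains $p$ if there exist integers $i_1<\cdots<i_k$ with $w(i_1),\dots,w(i_k)$ in the same relative order as $p_1,\dots,p_k$; otherwise $w$ avoids $p$. $F_{p,n}(x)=\sum_{w\in\widetilde{S}_n,\,w\text{ avoids }p}x^{\ell(w)}=\sum_i a_ix^i$. *)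

From HB Require Import structures.
From mathcomp Require Import all_boot all_order all_algebra all_fingroup.
Set Implicit Arguments. Unset Strict Implicit. Unset Printing Implicit Defensive.
Import Order.TTheory GRing.Theory Num.Theory.
Local Open Scope ring_scope.

Definition is_affine_perm (n : nat) (w : int -> int) : Prop :=
  (exists g : int -> int, cancel w g /\ cancel g w) /\
  (forall i : int, w (i + n%:Z) = w i + n%:Z) /\
  \sum_(1 <= i < n.+1) w i%:Z = ('C(n.+1, 2))%:Z.

Definition s_gen (n i : nat) (j : int) : int :=
  if ((j - i%:Z) %% n%:Z)%Z == 0 then j + 1
  else if ((j - i%:Z - 1) %% n%:Z)%Z == 0 then j - 1
  else j.

Definition word_eval (n : nat) (word : seq 'I_n) : int -> int :=
  foldr (fun (i : 'I_n) f => fun j => s_gen n (nat_of_ord i) (f j)) id word.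

Definition has_length (n : nat) (w : int -> int) (l : nat) : Prop :=
  (exists word : seq 'I_n, size word = l /\ forall j, word_eval word j = w j) /\
  (forall word : seq 'I_n, (forall j, word_eval word j = w j) -> (l <= size word)%N).

Definition contains (k : nat) (w : int -> int) (p : 'S_k) : Prop :=
  exists f : 'I_k -> int,
    (forall a b : 'I_k, (a < b)%N -> f a < f b) /\
    (forall a b : 'I_k, (w (f a) < w (f b)) = (p a < p b)%N).

Definition avoids (k : nat) (w : int -> int) (p : 'S_k) : Prop := ~ contains w p.

Definition lds_ge4 (k : nat) (p : 'S_k) : Prop :=
  exists a b c d : 'I_k,
    [/\ (a < b)%N, (b < c)%N, (c < d)%N &
        [/\ (p b < p a)%N, (p c < p b)%N & (p d < p c)%N]].

From HB Require Import structures.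
From mathcomp Require Import all_boot all_order all_algebra all_fingroup.
From mathcomp Require Import zify ring.
Import Order.TTheory GRing.Theory Num.Theory.
Local Open Scope ring_scope.

(* For a, b >= 0 let t(a,b) be the translation x |-> x + n * lam(x mod n) whose values
   on the window 1, ..., n are lam = (-a - (n-1) b, b, ..., b, a + b).  An inversion
   x < y, t(y) < t(x) of a translation forces lam(y) < lam(x), and lam takes only three
   values, so t(a,b) avoids every pattern with a decreasing subsequence of length 4.
   Its length is (n-1)(2a + nb).  Upper bound: t(a,b) is the product of a copies of an
   explicit word of length 2(n-1) for t(1,0) and of b(n-1) copies of the Coxeter word
   s_1 ... s_(n-1) s_0, whose (n-1)-st power is t(0,1).  Lower bound: the part of Shi's
   length formula over the pairs (1,c) and (c,n) grows by at most one per generator and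
   equals (n-1)(2a + nb) on t(a,b).  The M elements t(n(M-t), 2t), t < M, are distinct
   and all have length 2n(n-1)M. *)

Section Residues.

Context {n : nat}.
Hypothesis n_gt0 : (0 < n)%N.

Let n_neq0 : n%:Z != 0. Proof. by rewrite eqz_nat -lt0n. Qed.

Lemma divz_window (q y : int) :
  q * n%:Z <= y -> y < q * n%:Z + n%:Z -> (y %/ n%:Z)%Z = q.
Proof.
move=> lo hi; have -> : y = q * n%:Z + (y - q * n%:Z) by ring.
by rewrite divzMDl // divz_small ?addr0 //; apply/andP; split; lia.
Qed.

Lemma modz_window (q y : int) :
  q * n%:Z <= y -> y < q * n%:Z + n%:Z -> (y %% n%:Z)%Z = y - q * n%:Z.
Proof. by move=> lo hi; rewrite /modz (@divz_window q). Qed.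

Lemma modz_bounds (x : int) : 0 <= (x %% n%:Z)%Z < n%:Z.
Proof. by rewrite modz_ge0 // ltz_pmod //; lia. Qed.

Lemma modz_nearP (q y : int) :
  - n%:Z <= y - q * n%:Z -> y - q * n%:Z < 2 * n%:Z ->
  [\/ y - q * n%:Z < 0 /\ (y %% n%:Z)%Z = y - q * n%:Z + n%:Z,
      0 <= y - q * n%:Z < n%:Z /\ (y %% n%:Z)%Z = y - q * n%:Z
    | n%:Z <= y - q * n%:Z /\ (y %% n%:Z)%Z = y - q * n%:Z - n%:Z].
Proof.
move=> lo hi; case: (ltrP (y - q * n%:Z) 0) => [neg|nneg].
  by apply: Or31; split; [|rewrite (@modz_window (q - 1))]; lia.
case: (ltrP (y - q * n%:Z) n%:Z) => [lt|ge].
  by apply: Or32; split; [|rewrite (@modz_window q)]; lia.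
by apply: Or33; split; [|rewrite (@modz_window (q + 1))]; lia.
Qed.

Lemma divz_nearP (q y : int) :
  - (2 * n%:Z) <= y - q * n%:Z -> y - q * n%:Z < 2 * n%:Z ->
  [\/ y - q * n%:Z < - n%:Z /\ (y %/ n%:Z)%Z = q - 2,
      - n%:Z <= y - q * n%:Z < 0 /\ (y %/ n%:Z)%Z = q - 1,
      0 <= y - q * n%:Z < n%:Z /\ (y %/ n%:Z)%Z = q
    | n%:Z <= y - q * n%:Z /\ (y %/ n%:Z)%Z = q + 1].
Proof.
move=> lo hi; case: (ltrP (y - q * n%:Z) (- n%:Z)) => [lt1|ge1].
  by apply: Or41; split; [|rewrite (@divz_window (q - 2))]; lia.
case: (ltrP (y - q * n%:Z) 0) => [lt2|ge2].
  by apply: Or42; split; [|rewrite (@divz_window (q - 1))]; lia.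
case: (ltrP (y - q * n%:Z) n%:Z) => [lt3|ge3].
  by apply: Or43; split; [|rewrite (@divz_window q)]; lia.
by apply: Or44; split; [|rewrite (@divz_window (q + 1))]; lia.
Qed.

Lemma modz_nat_window (a : nat) :
  (0 < a <= n)%N -> (a%:Z %% n%:Z)%Z = if a == n then 0 else a%:Z.
Proof.
by move=> ha; case: eqP => e; [rewrite (@modz_window 1) | rewrite (@modz_window 0)]; lia.
Qed.

End Residues.

Ltac mod_free t := lazymatch t with
  | context [(_ %% _)%Z] => fail
  | context [if _ then _ else _] => fail
  | _ => idtac end.

Ltac split_if := match goal with |- context [if ?c then _ else _] =>
  mod_free c; let h := fresh "c" in case h: c; cbn iota; try (exfalso; lia) end.

(* For goals about [q * n + r] with [0 <= r < n]: split every test and evaluate every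
   [y %% n] and [y %/ n] with [y] within two periods of [q * n], then conclude by [lia]. *)
Ltac residue_cases n_gt0 q :=
  repeat first
    [ split_if
    | match goal with |- context [((?y) %% ?m)%Z] =>
        mod_free y;
        move: (@modz_nearP _ n_gt0 q y ltac:(lia) ltac:(lia));
        move: (y %% m)%Z => ? [[? ?]|[/andP[? ?] ?]|[? ?]]; try (exfalso; lia) end
    | match goal with |- context [((?y) %/ ?m)%Z] =>
        mod_free y;
        move: (@divz_nearP _ n_gt0 q y ltac:(lia) ltac:(lia));
        move: (y %/ m)%Z => ? [[? ?]|[/andP[? ?] ?]|[/andP[? ?] ?]|[? ?]];
        try (exfalso; lia) end ];
  lia.

Ltac residue_split n_gt0 x q r :=
  lazymatch type of n_gt0 with is_true (0 < ?m)%N =>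
    have := modz_bounds n_gt0 x; have := divz_eq x m%:Z;
    move: (x %/ m%:Z)%Z (x %% m%:Z)%Z => q r -> /andP[? ?] end.

Section AffinePermutations.

Variable n : nat.
Hypothesis n_gt2 : (2 < n)%N.

Let n_gt0 : (0 < n)%N. Proof. by apply: ltn_trans n_gt2. Qed.

Definition next_residue (i : nat) : int := if i.+1 == n then 0 else i.+1%:Z.

Lemma next_residueP (i : nat) : (i < n)%N ->
  (i.+1 = n /\ next_residue i = 0) \/ ((i.+1 < n)%N /\ next_residue i = i.+1%:Z).
Proof. by rewrite /next_residue; case: eqP => e; lia. Qed.

Definition s_shift (i : nat) (r : int) : int :=
  if r == i%:Z then 1 else if r == next_residue i then -1 else 0.

Lemma s_genE (i : nat) (x : int) : (i < n)%N ->
  s_gen n i x = x + s_shift i (x %% n%:Z)%Z.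
Proof.
move=> lt_in; rewrite /s_gen /s_shift.
have := @next_residueP i lt_in; move: (next_residue i) => j hj.
by residue_split n_gt0 x q r; residue_cases n_gt0 q.
Qed.

Definition swap_residue (i : nat) (r : int) : int :=
  if r == i%:Z then next_residue i else if r == next_residue i then i%:Z else r.

Lemma swap_residueK (i : nat) : involutive (swap_residue i).
Proof. by move=> r; rewrite /swap_residue; do ![case: eqP => /=]; congruence. Qed.

Lemma modz_s_gen (i : nat) (x : int) : (i < n)%N ->
  (s_gen n i x %% n%:Z)%Z = swap_residue i (x %% n%:Z)%Z.
Proof.
move=> lt_in; rewrite s_genE // /s_shift /swap_residue.
have := @next_residueP i lt_in; move: (next_residue i) => j hj.
by residue_split n_gt0 x q r; residue_cases n_gt0 q.
Qed.

Definition adjacent_residues (i : nat) (ra rb : int) : bool :=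
  ((ra == i%:Z) && (rb == next_residue i)) || ((ra == next_residue i) && (rb == i%:Z)).

Lemma divz_sub_s_gen (i : nat) (x y : int) : (i < n)%N ->
  let d := ((y - x) %/ n%:Z)%Z in
  let d' := ((s_gen n i y - s_gen n i x) %/ n%:Z)%Z in
  `|d'| <= `|d| + 1 /\ (d' != d -> adjacent_residues i (x %% n%:Z)%Z (y %% n%:Z)%Z).
Proof.
move=> lt_in /=; rewrite !s_genE // /s_shift /adjacent_residues.
have := @next_residueP i lt_in; move: (next_residue i) => j hj.
residue_split n_gt0 x qa ra; residue_split n_gt0 y qb rb.
residue_cases n_gt0 (qb - qa).
Qed.

Definition residue_injective (F : int -> int) : Prop :=
  {in [pred a : nat | (0 < a <= n)%N] &, injective (fun a : nat => (F a%:Z %% n%:Z)%Z)}.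

Lemma residue_injective_id : residue_injective id.
Proof.
move=> a b /andP[a0 an] /andP[b0 bn] /=.
by rewrite !modz_nat_window //; case: (a =P n); case: (b =P n); lia.
Qed.

Lemma residue_injective_s_gen (i : nat) (F : int -> int) : (i < n)%N ->
  residue_injective F -> residue_injective (s_gen n i \o F).
Proof.
move=> lt_in injF a b ha hb /=; rewrite !modz_s_gen //.
by move/(can_inj (swap_residueK i)); apply: injF.
Qed.

Lemma residue_injective_word_eval (w : seq 'I_n) : residue_injective (word_eval w).
Proof.
elim: w => [|i w IHw]; first exact: residue_injective_id.
exact: residue_injective_s_gen.
Qed.

Lemma adjacent_residuesP {i : nat} {a b a' b' : int} :
  adjacent_residues i a b -> adjacent_residues i a' b' ->
  (a = a' /\ b = b') \/ (a = b' /\ b = a').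
Proof.
rewrite /adjacent_residues.
by do 2!case/orP=> /andP[/eqP-> /eqP->]; [left|right|right|left].
Qed.

Lemma ler_sum_change1 (T : eqType) (r : seq T) (u v : T -> int) : uniq r ->
  {in r, forall x, v x <= u x + 1} ->
  {in r &, forall x y, v x != u x -> v y != u y -> x = y} ->
  \sum_(x <- r) v x <= \sum_(x <- r) u x + 1.
Proof.
elim: r => [|x r IHr] /=; first by rewrite !big_nil.
case/andP=> xr ur le_vu eq_changed; rewrite !big_cons.
have [vux|vux] := eqVneq (v x) (u x).
  rewrite vux -addrA lerD2l; apply: IHr => // [y yr|y z yr zr].
    by apply: le_vu; rewrite inE yr orbT.
  by apply: eq_changed; rewrite inE ?yr ?zr orbT.
have -> : \sum_(y <- r) v y = \sum_(y <- r) u y.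
  apply: eq_big_seq => y yr; apply/eqP; apply: contraNT xr => vuy.
  by rewrite (eq_changed x y) ?inE ?eqxx ?yr ?orbT.
by rewrite addrAC lerD2r le_vu ?inE ?eqxx.
Qed.

Definition ordered_pairs (P : seq (nat * nat)) : bool :=
  uniq P && all (fun ab => (0 < ab.1 < ab.2)%N && (ab.2 <= n)%N) P.

(* Shi's formula [l(w) = \sum_(1 <= a < b <= n) |(w b - w a) %/ n|], restricted to the
   pairs of [P]. *)
Definition shi_sum (P : seq (nat * nat)) (F : int -> int) : int :=
  \sum_(ab <- P) `|((F ab.2%:Z - F ab.1%:Z) %/ n%:Z)%Z|.

Lemma adjacent_pair_uniq {F : int -> int} {i a b a' b' : nat} :
  residue_injective F -> (0 < a < b)%N -> (b <= n)%N -> (0 < a' < b')%N -> (b' <= n)%N ->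
  adjacent_residues i (F a%:Z %% n%:Z)%Z (F b%:Z %% n%:Z)%Z ->
  adjacent_residues i (F a'%:Z %% n%:Z)%Z (F b'%:Z %% n%:Z)%Z -> (a, b) = (a', b').
Proof.
move=> injF ab bn ab' b'n adj adj'.
have inj c c' : (0 < c <= n)%N -> (0 < c' <= n)%N ->
    (F c%:Z %% n%:Z)%Z = (F c'%:Z %% n%:Z)%Z -> c = c'.
  by move=> hc hc'; apply: injF.
case: (adjacent_residuesP adj adj') => [[ea eb]|[ea eb]].
  by rewrite (inj a a' ltac:(lia) ltac:(lia) ea) (inj b b' ltac:(lia) ltac:(lia) eb).
have := inj a b' ltac:(lia) ltac:(lia) ea; have := inj b a' ltac:(lia) ltac:(lia) eb; lia.
Qed.

Lemma shi_sum_s_gen (P : seq (nat * nat)) (F : int -> int) (i : nat) :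
  (i < n)%N -> ordered_pairs P -> residue_injective F ->
  shi_sum P (s_gen n i \o F) <= shi_sum P F + 1.
Proof.
move=> lt_in /andP[uP /allP ordP] injF.
apply: ler_sum_change1 => // [[a b] _ | [a b] [a' b'] abP abP'] /=.
  by case: (divz_sub_s_gen i (F a%:Z) (F b%:Z) lt_in).
move=> /(contra_neq (fun e => congr1 Num.norm e)) ch.
move=> /(contra_neq (fun e => congr1 Num.norm e)) ch'.
have [_ /(_ ch) adj] := divz_sub_s_gen i (F a%:Z) (F b%:Z) lt_in.
have [_ /(_ ch') adj'] := divz_sub_s_gen i (F a'%:Z) (F b'%:Z) lt_in.
move: (ordP _ abP) (ordP _ abP') => /= /andP[ab bn] /andP[ab' b'n].
exact: (adjacent_pair_uniq injF ab bn ab' b'n adj adj').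
Qed.

Lemma divz_window_sub (a b : nat) (k : int) :
  (0 < a < b)%N -> (b <= n)%N -> ((b%:Z - a%:Z + k * n%:Z) %/ n%:Z)%Z = k.
Proof. by move=> ab bn; rewrite (@divz_window _ n_gt0 k) //; lia. Qed.

Lemma shi_sum_id (P : seq (nat * nat)) : ordered_pairs P -> shi_sum P id = 0.
Proof.
case/andP=> _ /allP ordP; apply: big1_seq => -[a b] /andP[_ /ordP /= /andP[ab bn]].
by rewrite -[_ - _]addr0 -(mul0r n%:Z) divz_window_sub.
Qed.

Lemma shi_sum_word_eval (P : seq (nat * nat)) (w : seq 'I_n) :
  ordered_pairs P -> shi_sum P (word_eval w) <= (size w)%:Z.
Proof.
move=> ordP; elim: w => [|i w IHw]; first by rewrite shi_sum_id.
apply: le_trans (shi_sum_s_gen _ _ _ (ltn_ord i) ordP (residue_injective_word_eval w)) _.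
by rewrite /= -addn1 PoszD lerD2r.
Qed.

Definition transl (lam : int -> int) (x : int) : int := x + n%:Z * lam (x %% n%:Z)%Z.

Lemma modz_transl (lam : int -> int) (x : int) :
  (transl lam x %% n%:Z)%Z = (x %% n%:Z)%Z.
Proof. by rewrite /transl addrC mulrC modzMDl. Qed.

Lemma transl_comp (lam mu : int -> int) (x : int) :
  transl lam (transl mu x) = transl (fun r => lam r + mu r) x.
Proof. by rewrite {1}/transl modz_transl /transl; ring. Qed.

Lemma iter_transl (k : nat) (lam : int -> int) (x : int) :
  iter k (transl lam) x = transl (fun r => k%:Z * lam r) x.
Proof.
elim: k => [|k IHk]; first by rewrite /transl mul0r mulr0 addr0.
by rewrite iterS IHk transl_comp /transl -addn1 PoszD; ring.
Qed.

Lemma transl_affine_perm (lam : int -> int) :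
  \sum_(1 <= i < n.+1) lam (i%:Z %% n%:Z)%Z = 0 -> is_affine_perm n (transl lam).
Proof.
move=> sum_lam; split; [|split].
- exists (transl (fun r => - lam r)).
  by split=> x; rewrite transl_comp -[RHS](addr0 x) /transl; congr (_ + _); ring.
- by move=> x; rewrite /transl modzDr; ring.
rewrite big_split /= -mulr_sumr sum_lam mulr0 addr0.
by rewrite -bin2_sum (big_morph Posz PoszD (erefl 0%:Z)) [in RHS]big_ltn // add0r.
Qed.

Lemma transl_inversion (lam : int -> int) (x y : int) :
  x < y -> transl lam y < transl lam x -> lam (y %% n%:Z)%Z < lam (x %% n%:Z)%Z.
Proof. by rewrite /transl; move: (lam _) (lam _) => ly lx; nia. Qed.

Lemma transl_avoids (lam : int -> int) (A B C : int) (k : nat) (p : 'S_k) :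
  (forall r, lam r \in [:: A; B; C]) -> lds_ge4 p -> avoids (transl lam) p.
Proof.
move=> three [a [b [c [d [ab bc cd [pba pcb pdc]]]]]] [f [f_incr f_pat]].
have inv (u v : 'I_k) :
    (u < v)%N -> (p v < p u)%N -> lam (f v %% n%:Z)%Z < lam (f u %% n%:Z)%Z.
  by move=> uv pvu; apply: transl_inversion (f_incr _ _ uv) _; rewrite f_pat.
move: (inv _ _ ab pba) (inv _ _ bc pcb) (inv _ _ cd pdc).
move: (three (f a %% n%:Z)%Z) (three (f b %% n%:Z)%Z) (three (f c %% n%:Z)%Z)
  (three (f d %% n%:Z)%Z); rewrite !inE; lia.
Qed.

Lemma divz_transl_sub (lam : int -> int) (a b : nat) : (0 < a < b)%N -> (b <= n)%N ->
  ((transl lam b%:Z - transl lam a%:Z) %/ n%:Z)%Z =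
  lam (b%:Z %% n%:Z)%Z - lam (a%:Z %% n%:Z)%Z.
Proof.
move=> ab bn; rewrite [X in (X %/ _)%Z](_ : _ = b%:Z - a%:Z +
  (lam (b%:Z %% n%:Z)%Z - lam (a%:Z %% n%:Z)%Z) * n%:Z); last by rewrite /transl; ring.
exact: divz_window_sub.
Qed.

Lemma shi_sum_transl (P : seq (nat * nat)) (lam : int -> int) : ordered_pairs P ->
  shi_sum P (transl lam) =
  \sum_(ab <- P) `|lam (ab.2%:Z %% n%:Z)%Z - lam (ab.1%:Z %% n%:Z)%Z|.
Proof.
case/andP=> _ /allP ordP; apply: eq_big_seq => -[a b] /ordP /= /andP[ab bn].
by rewrite divz_transl_sub.
Qed.

Definition eval_nat_word (ws : seq nat) : int -> int :=
  foldr (fun m f j => s_gen n m (f j)) id ws.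

Lemma eval_nat_word_cat (u v : seq nat) (x : int) :
  eval_nat_word (u ++ v) x = eval_nat_word u (eval_nat_word v x).
Proof. by rewrite /eval_nat_word foldr_cat; elim: u x => //= m u IHu x; rewrite IHu. Qed.

Lemma eval_nat_word_flatten_nseq (k : nat) (w : seq nat) (x : int) :
  eval_nat_word (flatten (nseq k w)) x = iter k (eval_nat_word w) x.
Proof. by elim: k x => //= k IHk x; rewrite eval_nat_word_cat IHk. Qed.

Definition ord_of (m : nat) : 'I_n := Ordinal (ltn_pmod m n_gt0).

Lemma word_eval_map_ord (ws : seq nat) : all (fun m => (m < n)%N) ws ->
  word_eval (map ord_of ws) =1 eval_nat_word ws.
Proof. by elim: ws => //= m ws IHws /andP[mn /IHws eq_ws] x; rewrite eq_ws modn_small. Qed.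

Lemma eval_iota (m k : nat) (x : int) : (0 < m)%N -> (m + k = n)%N ->
  eval_nat_word (iota m k) x =
  x + (if m%:Z <= (x %% n%:Z)%Z then 1 else if (x %% n%:Z)%Z == 0 then - k%:Z else 0).
Proof.
elim: k m x => [|k IHk] m x m0 mk /=.
  by residue_split n_gt0 x q r; residue_cases n_gt0 q.
rewrite IHk ?addSnnS // s_genE; last by lia.
have := @next_residueP m ltac:(lia); rewrite /s_shift; move: (next_residue m) => j hj.
by residue_split n_gt0 x q r; residue_cases n_gt0 q.
Qed.

Lemma eval_rev_iota (m : nat) (x : int) : (m.+2 <= n)%N ->
  eval_nat_word (rev (iota 1 m)) x =
  x + (if (x %% n%:Z)%Z == 1 then m%:Z
       else if (2 <= (x %% n%:Z)%Z) && ((x %% n%:Z)%Z <= m.+1%:Z) then -1 else 0).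
Proof.
elim: m x => [|m IHm] x mn.
  by rewrite /=; residue_split n_gt0 x q r; residue_cases n_gt0 q.
have -> : rev (iota 1 m.+1) = m.+1 :: rev (iota 1 m).
  by rewrite -[m.+1]addn1 iotaD rev_cat add1n addn1.
rewrite /= IHm; last by lia.
rewrite s_genE; last by lia.
have := @next_residueP m.+1 ltac:(lia); rewrite /s_shift; move: (next_residue m.+1) => j hj.
by residue_split n_gt0 x q r; residue_cases n_gt0 q.
Qed.

Definition lam1 (r : int) : int := if r == 1 then -1 else if r == 0 then 1 else 0.

Definition lam2 (r : int) : int := if r == 1 then 1 - n%:Z else 1.

Definition lam1_word : seq nat := iota 1 n.-1 ++ rev (iota 1 n.-2) ++ [:: 0%N].

Definition coxeter_word : seq nat := iota 1 n.-1 ++ [:: 0%N].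

Lemma eval_lam1_word (x : int) : eval_nat_word lam1_word x = transl lam1 x.
Proof.
rewrite /lam1_word !eval_nat_word_cat eval_iota ?eval_rev_iota; try lia.
rewrite /= s_genE // /s_shift /next_residue /transl /lam1.
by residue_split n_gt0 x q r; residue_cases n_gt0 q.
Qed.

Lemma eval_coxeter_word (x : int) :
  eval_nat_word coxeter_word x =
  x + (if (x %% n%:Z)%Z == 1 then - n%:Z else if (x %% n%:Z)%Z == 0 then 2 else 1).
Proof.
rewrite /coxeter_word eval_nat_word_cat eval_iota; try lia.
rewrite /= s_genE // /s_shift /next_residue.
by residue_split n_gt0 x q r; residue_cases n_gt0 q.
Qed.

(* Residue 1 is fixed, and the other residues run through the cycle
   [0 -> 2 -> 3 -> ... -> n - 1 -> 0], gaining an extra unit on the step [0 -> 2]. *)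
Lemma iter_coxeter_word (k : nat) (x : int) : (k < n)%N ->
  iter k (eval_nat_word coxeter_word) x =
  if (x %% n%:Z)%Z == 1 then x - k%:Z * n%:Z
  else x + k%:Z + (if n%:Z + 1 - (if (x %% n%:Z)%Z == 0 then n%:Z else (x %% n%:Z)%Z) <= k%:Z
                   then 1 else 0).
Proof.
residue_split n_gt0 x q r; elim: k => [|k IHk] kn /=; first by residue_cases n_gt0 q.
rewrite IHk ?eval_coxeter_word; last by lia.
have [r1|r_ne1] := eqVneq r 1; last by residue_cases n_gt0 q.
rewrite r1 (_ : _ - _ = (q - k%:Z) * n%:Z + 1); last by ring.
by rewrite modzMDl modz_small ?eqxx; nia.
Qed.

Lemma iter_coxeter_word_transl (x : int) :
  iter n.-1 (eval_nat_word coxeter_word) x = transl lam2 x.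
Proof.
rewrite iter_coxeter_word /transl /lam2; last by lia.
by residue_split n_gt0 x q r; residue_cases n_gt0 q.
Qed.

Definition lam_ab (a b : nat) (r : int) : int := a%:Z * lam1 r + b%:Z * lam2 r.

Lemma lam_ab_window (a b c : nat) : (0 < c <= n)%N ->
  lam_ab a b (c%:Z %% n%:Z)%Z =
  if c == 1%N then - a%:Z - (n%:Z - 1) * b%:Z
  else if c == n then a%:Z + b%:Z else b%:Z.
Proof.
move=> c_win; rewrite modz_nat_window // /lam_ab /lam1 /lam2.
by repeat split_if; lia.
Qed.

Definition word_ab (a b : nat) : seq nat :=
  flatten (nseq a lam1_word) ++ flatten (nseq (b * n.-1) coxeter_word).

Lemma eval_word_ab (a b : nat) (x : int) :
  eval_nat_word (word_ab a b) x = transl (lam_ab a b) x.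
Proof.
rewrite /word_ab eval_nat_word_cat !eval_nat_word_flatten_nseq iterM.
rewrite (eq_iter eval_lam1_word) (eq_iter iter_coxeter_word_transl).
by rewrite !iter_transl transl_comp.
Qed.

Lemma size_word_ab (a b : nat) : size (word_ab a b) = (n.-1 * (2 * a + n * b))%N.
Proof.
rewrite size_cat !size_flatten /shape !map_nseq !sumn_nseq /lam1_word /coxeter_word.
rewrite !size_cat size_rev !size_iota /=; nia.
Qed.

Lemma word_ab_lt (a b : nat) : all (fun m => (m < n)%N) (word_ab a b).
Proof.
apply/allP=> m; rewrite mem_cat => /orP[] /flattenP[s /nseqP[-> _]];
  by rewrite /lam1_word /coxeter_word !mem_cat ?mem_rev !mem_iota inE; lia.
Qed.

(* [lam_ab a b] is constant on the residues 2, ..., n - 1, so for [transl (lam_ab a b)]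
   these pairs already carry all of Shi's sum. *)
Definition star_pairs : seq (nat * nat) :=
  (1%N, n) :: [seq (1%N, c) | c <- index_iota 2 n] ++ [seq (c, n) | c <- index_iota 2 n].

Lemma ordered_star_pairs : ordered_pairs star_pairs.
Proof.
have win c : (c \in index_iota 2 n) = (1 < c < n)%N by rewrite mem_iota; lia.
apply/andP; split.
  rewrite /star_pairs cons_uniq mem_cat cat_uniq !map_inj_uniq ?iota_uniq;
    try by move=> c c' [].
  rewrite !andbT; apply/andP; split.
    by apply/norP; split; apply/mapP=> -[c]; rewrite win => ? [e]; lia.
  by apply/hasPn=> _ /mapP[c c_win ->]; apply/mapP=> -[c']; rewrite win => ? [? ?]; lia.
apply/allP=> -[a b]; rewrite inE mem_cat => /orP[/eqP[-> ->] /=|]; first lia.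
by case/orP=> /mapP[c]; rewrite win => c_win [-> ->] /=; lia.
Qed.

Lemma shi_sum_star_ab (a b : nat) :
  shi_sum star_pairs (transl (lam_ab a b)) = (n.-1 * (2 * a + n * b))%N%:Z.
Proof.
rewrite shi_sum_transl ?ordered_star_pairs // big_cons big_cat /= !big_map -big_split /=.
rewrite (eq_big_nat _ _ (F2 := fun _ => (2 * a + n * b)%N%:Z)); last first.
  by move=> c c_win; rewrite !lam_ab_window; try lia; repeat split_if; nia.
by rewrite sumr_const_nat !pmulrn !mulrzz !lam_ab_window; try lia; repeat split_if; nia.
Qed.

Lemma affine_transl_ab (a b : nat) : is_affine_perm n (transl (lam_ab a b)).
Proof.
apply: transl_affine_perm; rewrite big_nat_recr // big_ltn //=; last by lia.
rewrite (eq_big_nat _ _ (F2 := fun _ => b%:Z)); last first.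
  by move=> c c_win; rewrite lam_ab_window; try lia; repeat split_if; lia.
by rewrite sumr_const_nat pmulrn mulrzz !lam_ab_window; try lia; repeat split_if; nia.
Qed.

Lemma avoids_transl_ab (a b k : nat) (p : 'S_k) :
  lds_ge4 p -> avoids (transl (lam_ab a b)) p.
Proof.
apply: (transl_avoids _ (- a%:Z - (n%:Z - 1) * b%:Z) b%:Z (a%:Z + b%:Z)).
by move=> r; rewrite /lam_ab /lam1 /lam2 !inE; repeat split_if; nia.
Qed.

Lemma has_length_transl_ab (a b : nat) :
  has_length n (transl (lam_ab a b)) (n.-1 * (2 * a + n * b)).
Proof.
split.
  exists (map ord_of (word_ab a b)); split; first by rewrite size_map size_word_ab.
  by move=> x; rewrite word_eval_map_ord ?word_ab_lt // eval_word_ab.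
move=> w eq_w; rewrite -lez_nat -shi_sum_star_ab.
rewrite (_ : shi_sum _ _ = shi_sum star_pairs (word_eval w)).
  exact: shi_sum_word_eval ordered_star_pairs.
by apply: eq_bigr => ab _; rewrite !eq_w.
Qed.

End AffinePermutations.

Theorem mainTheorem9 (n k : nat) (p : 'S_k) :
  (3 <= n)%N -> lds_ge4 p ->
  forall M : nat, exists (i : nat) (W : nat -> int -> int),
    (forall a b : nat, (a < b)%N -> (b < M)%N -> exists x, W a x <> W b x) /\
    (forall a : nat, (a < M)%N ->
       is_affine_perm n (W a) /\ avoids (W a) p /\ has_length n (W a) i).
Proof.
move=> n_gt2 lds_p M.
pose W t := transl n (lam_ab n (n * (M - t)) (2 * t)).
exists (n.-1 * (2 * (n * M)))%N, W; split=> [t t' lt_tt' lt_t'M | t lt_tM].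
  exists 2; rewrite /W /transl !(@lam_ab_window n n_gt2) //; repeat split_if; nia.
split; first exact: (@affine_transl_ab n n_gt2).
split; first exact: (@avoids_transl_ab n n_gt2).
rewrite (_ : (n.-1 * _)%N = n.-1 * (2 * (n * (M - t)) + n * (2 * t)))%N; last by nia.
exact: (@has_length_transl_ab n n_gt2).
Qed.
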